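(* Let $0<\delta<1$ and let $Z=(Z_1,\dots,Z_k)$ be, given the database $X=(X_1,\dots,X_n)$, $k$ i.i.d. draws from the smoothed histogram density $\hat f_{m,\delta}(x)=(1-\delta)\hat f_m(x)+\delta$ on $[0,1]^r$. If $$k\log\Big(\frac{(1-\delta)m}{n\delta}+1\Big)\le\alpha,$$ then the resulting mechanism $Q_n(\cdot\mid X)$ satisfies $\alpha$-differential privacy.
   Context: Let $r\ge 1$ and $\mathcal X=[0,1]^r$. A database is $x=(x_1,\dots,x_n)\in\mathcal X^n$; the Hamming distance is $\delta(x,y)=\#\{i:x_i\ne y_i\}$. A data release mechanism is a Markov kernel $Q_n(\cdot\mid X=x)$ on $\mathcal X^k$; for $\alpha\ge0$ it satisfies $\alpha$-differential privacy if $Q_n(B\mid X=x)\le e^{\alpha}Q_n(B\mid X=y)$ for all measurable $B\subseteq\mathcal X^k$ and all $x,y$ with $\delta(x,y)=1$. Histogram: let $0<h<1$ be a binwidth with $m=h^{-r}$ an integer, and partition $[0,1]^r$ into $m$ cubes $B_1,\dots,B_m$ of side $h$. Let $C_j=\sum_{i=1}^n I(X_i\in B_j)$, $\hat p_j=C_j/n$, and $\hat f_m(x)=\sum_{j=1}^m (\hat p_j/h^r)I(x\in B_j)$. *)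

From HB Require Import structures.
From mathcomp Require Import all_boot all_order all_algebra.
From mathcomp Require Import all_classical all_reals all_analysis.
Set Implicit Arguments. Unset Strict Implicit. Unset Printing Implicit Defensive.
Import Order.TTheory GRing.Theory Num.Theory.
Local Open Scope ring_scope.

Section Defs.
Variable R : realType.

Definition in_unit_cube (r : nat) (z : r.-tuple R) : bool :=
  [forall j : 'I_r, (0 <= tnth z j) && (tnth z j <= 1)].

Definition is_database (r n : nat) (x : n.-tuple (r.-tuple R)) : Prop :=
  forall i : 'I_n, in_unit_cube (tnth x i).

Definition hamming (T : eqType) (n : nat) (x y : n.-tuple T) : nat :=
  #|[pred i : 'I_n | tnth x i != tnth y i]|.

(* The partition of [0,1]^r into the N^r cubes of side h = 1/N, indexed by
   c : 'I_r -> 'I_N.  Cube B_c = prod_j [c_j h, (c_j+1) h), where the last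
   cube in each coordinate is closed on the right so that the cubes
   partition [0,1]^r. *)
Definition in_bin (r N : nat) (h : R) (c : {ffun 'I_r -> 'I_N})
    (z : r.-tuple R) : bool :=
  [forall j : 'I_r,
     ((c j)%:R * h <= tnth z j) &&
     ((tnth z j < (c j).+1%:R * h) || ((val (c j) == N.-1) && (tnth z j == 1)))].

Definition bin_count (r n N : nat) (h : R) (x : n.-tuple (r.-tuple R))
    (c : {ffun 'I_r -> 'I_N}) : nat :=
  #|[pred i : 'I_n | in_bin h c (tnth x i)]|.

Definition histogram (r n N : nat) (h : R) (x : n.-tuple (r.-tuple R))
    (z : r.-tuple R) : R :=
  \sum_(c : {ffun 'I_r -> 'I_N})
     ((bin_count h x c)%:R / n%:R) / h ^+ r * (in_bin h c z)%:R.

Definition smoothed_histogram (r n N : nat) (h delta : R)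
    (x : n.-tuple (r.-tuple R)) (z : r.-tuple R) : R :=
  if in_unit_cube z then (1 - delta) * histogram N h x z + delta else 0.

End Defs.

Local Open Scope ereal_scope.
Local Open Scope classical_set_scope.

(* lam is Lebesgue measure on R^r (with the product Borel sigma-algebra on
   r.-tuple R): it gives every box prod_j [a_j,b_j] its volume.  This
   determines lam uniquely. *)
Definition is_lebesgue_tuple (R : realType) (r : nat)
    (lam : {measure set (r.-tuple R) -> \bar R}) : Prop :=
  forall a b : 'I_r -> R, (forall j, (a j <= b j)%R) ->
    lam [set z : r.-tuple R | forall j, (a j <= tnth z j <= b j)%R] =
    (\prod_(j < r) (b j - a j))%:E.

From HB Require Import structures.
From mathcomp Require Import all_boot all_order all_algebra.
From mathcomp Require Import all_classical all_reals all_analysis.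
From mathcomp Require Import measurable_realfun.
From mathcomp Require Import zify ring lra.
Set Implicit Arguments.
Unset Strict Implicit.
Unset Printing Implicit Defensive.

Import Order.TTheory GRing.Theory Num.Theory.
Local Open Scope ring_scope.
Local Open Scope classical_set_scope.

(* Neighbouring databases differ in one record, so every bin count moves by at
   most one.  As a bin has volume 1/m and the smoothed density is at least
   delta on the cube, the smoothed densities of neighbours are pointwise within
   the factor K = (1 - delta) m / (n delta) + 1; integrating, the laws of one
   draw are within K on every measurable set, and the k-fold product laws are
   within K^k <= e^alpha on measurable rectangles.  Rectangles form a semiring
   of sets generating the product sigma-algebra and Q_n(.|y) is finite, so the
   monotone class theorem extends the inequality to all measurable sets. *)

Section setring_of_semiring.
Variables (U : pointedType) (G : set (set U)).
Hypotheses (G0 : G set0) (GI : setI_closed G) (GD : semi_setD_closed G).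

(* An alias carrying [G] as its canonical semiring of sets, so that the
   library's description of the generated ring applies. *)
Let semiring_carrier : Type := U.
HB.instance Definition _ := Pointed.on semiring_carrier.
HB.instance Definition _ :=
  @isSemiRingOfSets.Build default_measure_display semiring_carrier G G0 GI GD.

Lemma setring_fin_trivIset (A : set U) : <<r G>> A ->
  exists D : set (set U), [/\ A = \bigcup_(X in D) X, D `<=` G,
    finite_set D & trivIset D id].
Proof.
move=> GA; have : (@measurable _ (SetRing.type semiring_carrier)) A by [].
by rewrite SetRing.ring_measurableE => -[D [-> DG Dfin Dtriv]]; exists D.
Qed.

End setring_of_semiring.

Section measurable_rectangles.
Context d (T : measurableType d) (k : nat).

Definition rect (B : 'I_k -> set T) : set (k.-tuple T) :=
  [set z | forall i, B i (tnth z i)].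

Definition rects : set (set (k.-tuple T)) :=
  [set A | A = set0 \/ exists2 B, (forall i, measurable (B i)) & A = rect B].

Lemma rects0 : rects set0. Proof. by left. Qed.

Lemma rectsI : setI_closed rects.
Proof.
move=> A A' [->|[B mB ->]]; first by rewrite set0I; left.
move=> [->|[C mC ->]]; first by rewrite setI0; left.
right; exists (fun i => B i `&` C i); first by move=> i; exact: measurableI.
by apply/seteqP; split=> z /= => [[zB zC] i|zBC]; [|split=> i; case: (zBC i)].
Qed.

(* [rect B `\` rect C] is cut according to the first coordinate outside [C]. *)
Let rectD_piece (B C : 'I_k -> set T) (j : 'I_k) : set (k.-tuple T) :=
  rect (fun i => if (i < j)%N then B i `&` C i
                 else if i == j then B i `\` C i else B i).

Let rectD_pieces (B C : 'I_k -> set T) :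
  rect B `\` rect C = \bigcup_j rectD_piece B C j.
Proof.
apply/seteqP; split=> z /=.
  move=> [zB /existsNP[j0 zCj0]].
  pose outC i := ~~ `[< C i (tnth z i) >].
  have outCj0 : outC j0 by apply/negP => /asboolP.
  have [j /negP zCj jmin] := arg_minnP (fun i : 'I_k => val i) outCj0.
  exists j => // i; case: ifPn => [ij|_]; last case: eqP => [->|_]; last exact: zB.
  - split; first exact: zB.
    apply: contrapT => zCi.
    by have := jmin i (introN (asboolP _) zCi); rewrite leqNgt ij.
  - by split; [exact: zB|move/asboolP].
move=> [j _ zj]; split=> [i|zC].
  by have := zj i; case: ifP => _; [case|case: ifP => // _ []].
by have := zj j; rewrite ltnn eqxx => -[_]; apply.
Qed.

Let rectD_pieces_trivIset (B C : 'I_k -> set T) : trivIset setT (rectD_piece B C).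
Proof.
move=> j j' _ _ [z [zj zj']]; apply/val_inj/eqP; case: ltngtP => // jj'.
  by have := zj' j; have := zj j; rewrite jj' ltnn eqxx => -[_ ?] [].
by have := zj j'; have := zj' j'; rewrite jj' ltnn eqxx => -[_ ?] [].
Qed.

Lemma rectsD : semi_setD_closed rects.
Proof.
move=> A A' [->|[B mB ->]].
  by move=> _; exists set0; split=> //; rewrite ?set0D ?bigcup_set0.
move=> [->|[C mC ->]].
  exists [set rect B]; split; [exact: finite_set1| |by rewrite setD0 bigcup_set1|].
    by move=> X ->; right; exists B.
  by move=> X Y -> ->.
exists (rectD_piece B C @` setT); split.
- exact/finite_image/finite_finset.
- move=> X [j _ <-]; right; eexists; last reflexivity.
  move=> i /=; case: ifP => _; first exact: measurableI.
  by case: ifP => _ //; exact: measurableD.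
- by rewrite bigcup_image rectD_pieces.
- by move=> X Y [j _ <-] [j' _ <-] /rectD_pieces_trivIset ->.
Qed.

Lemma measurable_rect (B : 'I_k -> set T) :
  (forall i, measurable (B i)) -> measurable (rect B).
Proof.
move=> mB; have -> : rect B =
    \bigcap_(i in [set: 'I_k]) ((fun z : k.-tuple T => tnth z i) @^-1` B i).
  by apply/seteqP; split=> z /= zB i *; exact: zB.
apply: fin_bigcap_measurable => [|i _]; first exact: finite_finset.
by rewrite -[X in measurable X]setTI; exact: measurable_tnth.
Qed.

Lemma rects_measurable (A : set (k.-tuple T)) : rects A -> measurable A.
Proof. by move=> [->|[B mB ->]]; [exact: measurable0|exact: measurable_rect]. Qed.

Lemma measurable_sub_sigma_ring_rects : measurable `<=` <<sr <<r rects>> >>.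
Proof.
have rectsT : <<sr <<r rects>> >> setT.
  apply: sub_g_sigma_ring; apply: sub_setring; right.
  by exists (fun=> setT) => [_|]; [exact: measurableT|apply/seteqP].
have : sigma_algebra setT <<sr <<r rects>> >>.
  have [sr0 srD srU] := smallest_sigma_ring <<r rects>>.
  by split=> // B srB; exact: srD.
move/smallest_sub; apply => X; rewrite -bigcup_seq => -[i _ [Y mY <-]].
apply: sub_g_sigma_ring; apply: sub_setring; right.
exists (fun i' => if i' == i then Y else setT); first by move=> i'; case: ifP.
apply/seteqP; split=> z /= => [[_ zY] i'|zY]; first by case: ifP => // /eqP ->.
by split=> //; have := zY i; rewrite eqxx.
Qed.

Lemma le_measure_rect (R : realType) (mu nu : {measure set (k.-tuple T) -> \bar R}) :
  (nu setT < +oo)%E ->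
  (forall B : 'I_k -> set T, (forall i, measurable (B i)) ->
    (mu (rect B) <= nu (rect B))%E) ->
  forall A, measurable A -> (mu A <= nu A)%E.
Proof.
move=> nuT mu_le_nu.
pose C := [set A : set (k.-tuple T) | measurable A /\ (mu A <= nu A)%E].
have monoC : monotone C.
  split=> F monoF CF; have mF i : measurable (F i) by case: (CF i).
    have mU : measurable (\bigcup_i F i) by exact: bigcupT_measurable.
    split=> //; apply: lee_cvg_to (nondecreasing_cvg_mu (mu := mu) mF mU monoF)
      (nondecreasing_cvg_mu (mu := nu) mF mU monoF) _.
    by apply: nearW => i; case: (CF i).
  have nuF0 : (nu (F 0%N) < +oo)%E.
    by apply: le_lt_trans nuT; apply: le_measure; rewrite ?inE.
  have muF0 : (mu (F 0%N) < +oo)%E by apply: le_lt_trans nuF0; case: (CF 0%N).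
  have mI : measurable (\bigcap_i F i) by exact: bigcapT_measurable.
  split=> //; apply: lee_cvg_to (nonincreasing_cvg_mu muF0 mF mI monoF)
    (nonincreasing_cvg_mu nuF0 mF mI monoF) _.
  by apply: nearW => i; case: (CF i).
have setringC : <<r rects>> `<=` C.
  move=> A /(@setring_fin_trivIset _ _ rects0 rectsI rectsD) [D [-> DG Dfin Dtriv]].
  have mD (X : set (k.-tuple T)) : D X -> measurable X.
    by move=> /DG; exact: rects_measurable.
  split; first exact: fin_bigcup_measurable.
  rewrite !measure_fin_bigcup //; apply: lee_fsum => // X /DG [->|[B mB ->]].
    by rewrite !measure0.
  exact: mu_le_nu.
move=> A /measurable_sub_sigma_ring_rects A_rects.
by have [] := monotone_setring_sub_g_sigma_ring monoC (smallest_setring _)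
  setringC A_rects.
Qed.

End measurable_rectangles.

Section histogram_bounds.
Context (R : realType) (r n N m : nat) (h delta : R).
Hypotheses (h_gt0 : 0 < h) (mE : m%:R = h ^- r).

Lemma in_bin_unique (c c' : {ffun 'I_r -> 'I_N}) (z : r.-tuple R) :
  in_bin h c z -> in_bin h c' z -> c = c'.
Proof.
have bin_lt (a b : 'I_N) (t : R) : (a < b)%N ->
    (t < a.+1%:R * h) || ((val a == N.-1) && (t == 1)) -> b%:R * h <= t -> False.
  move=> ab + bt; have -> : (t < a.+1%:R * h) = false.
    by apply/negbTE; rewrite -leNgt (le_trans _ bt) // ler_pM2r // ler_nat.
  by move=> /andP[/eqP aN _]; move: ab (ltn_ord b); rewrite aN; lia.
move=> /forallP zc /forallP zc'; apply/ffunP => j; apply/val_inj/eqP.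
have /andP[cj cj'] := zc j; have /andP[c'j c'j'] := zc' j.
by case: ltngtP => // [/bin_lt/(_ cj' c'j)|/bin_lt/(_ c'j' cj)].
Qed.

Lemma histogram_cases (z : r.-tuple R) :
  (exists2 c : {ffun 'I_r -> 'I_N}, in_bin h c z &
    forall x : n.-tuple (r.-tuple R),
      histogram N h x z = (bin_count h x c)%:R / n%:R * m%:R) \/
  (forall x : n.-tuple (r.-tuple R), histogram N h x z = 0).
Proof.
have [[c zc]|zbins] := pselect (exists c : {ffun 'I_r -> 'I_N}, in_bin h c z).
  left; exists c => // x; rewrite /histogram (bigD1 c) //= zc mulr1 mE.
  rewrite big1 ?addr0 // => c' c'c; case: (boolP (in_bin h c' z)) => [zc'|_].
    by rewrite (in_bin_unique zc' zc) eqxx in c'c.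
  by rewrite mulr0.
right => x; rewrite /histogram big1 // => c _.
by case: (boolP (in_bin h c z)) => [zc|_]; [case: zbins; exists c|rewrite mulr0].
Qed.

Lemma bin_count_le (x : n.-tuple (r.-tuple R)) (c : {ffun 'I_r -> 'I_N}) :
  (bin_count h x c <= n)%N.
Proof. by rewrite -[n in (_ <= n)%N]card_ord max_card. Qed.

Lemma hamming_eq1 (T : eqType) (x y : n.-tuple T) : hamming x y = 1%N ->
  exists i0 : 'I_n, forall i, i != i0 -> tnth x i = tnth y i.
Proof.
rewrite /hamming => xy1.
have /card_gt0P[i0 xy_i0] : (0 < #|[pred i | tnth x i != tnth y i]|)%N.
  by rewrite xy1.
exists i0 => i ii0; apply/eqP; apply: contraNT ii0 => xy_i.
have := cardD1 i0 [pred i | tnth x i != tnth y i].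
rewrite xy_i0 xy1 => /eqP; rewrite eqSS eq_sym => /eqP/card0_eq/(_ i).
by rewrite !inE xy_i andbT => /negbT; rewrite negbK.
Qed.

Lemma bin_count_hamming1 (x y : n.-tuple (r.-tuple R)) (c : {ffun 'I_r -> 'I_N}) :
  hamming x y = 1%N -> (bin_count h x c <= (bin_count h y c).+1)%N.
Proof.
move=> /hamming_eq1[i0 xy]; rewrite /bin_count (cardD1 i0) -add1n leq_add //.
  by case: (_ \in _).
apply/subset_leq_card/fintype.subsetP => i; rewrite !inE => /andP[ii0].
by rewrite xy.
Qed.

Lemma histogram_ge0 (x : n.-tuple (r.-tuple R)) (z : r.-tuple R) :
  0 <= histogram N h x z.
Proof. by case: (histogram_cases z) => [[c _ ->]|->]. Qed.

Lemma histogram_le (x : n.-tuple (r.-tuple R)) (z : r.-tuple R) :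
  histogram N h x z <= m%:R.
Proof.
case: (histogram_cases z) => [[c _ ->]|->] //; rewrite ler_piMl //.
have bin_count_x := bin_count_le x c; move: x bin_count_x.
case: n => [|n'] x; first by rewrite invr0 mulr0.
by rewrite ler_pdivrMr ?ltr0n // mul1r ler_nat.
Qed.

Hypotheses (delta_gt0 : 0 < delta) (delta_lt1 : delta < 1).

Lemma smoothed_histogram_ge0 (x : n.-tuple (r.-tuple R)) (z : r.-tuple R) :
  0 <= smoothed_histogram N h delta x z.
Proof.
rewrite /smoothed_histogram; case: ifP => // _.
by rewrite addr_ge0 ?mulr_ge0 ?histogram_ge0 ?subr_ge0 ?ltW.
Qed.

Lemma smoothed_histogram_le (x : n.-tuple (r.-tuple R)) (z : r.-tuple R) :
  smoothed_histogram N h delta x z <= (m%:R + 1) * (in_unit_cube z)%:R.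
Proof.
rewrite /smoothed_histogram; case: ifP => _; last by rewrite mulr0.
have dH_ge0 : 0 <= delta * histogram N h x z.
  by rewrite mulr_ge0 ?histogram_ge0 ?ltW.
(* [lra] does not use section hypotheses, hence [have := delta_lt1]. *)
have := histogram_le x z; have := delta_lt1.
by rewrite mulr1 mulrBl mul1r; lra.
Qed.

Definition smoothing_ratio : R := (1 - delta) * m%:R / (n%:R * delta) + 1.

Lemma smoothing_ratio_ge1 : 1 <= smoothing_ratio.
Proof. by rewrite lerDr divr_ge0 ?mulr_ge0 ?subr_ge0 // ltW. Qed.

(* The worst case is [z] in a bin that is empty for [y] and holds one record
   of [x]. *)
Lemma smoothed_histogram_hamming1 (x y : n.-tuple (r.-tuple R)) (z : r.-tuple R) :
  hamming x y = 1%N ->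
  smoothed_histogram N h delta x z <=
  smoothing_ratio * smoothed_histogram N h delta y z.
Proof.
move=> xy1; rewrite /smoothed_histogram; case: ifP => _; last by rewrite mulr0.
set a := (1 - delta) * m%:R / n%:R.
have a_ge0 : 0 <= a by rewrite divr_ge0 // mulr_ge0 // subr_ge0 ltW.
have -> : smoothing_ratio = a / delta + 1 by rewrite /smoothing_ratio invfM mulrA.
case: (histogram_cases z) => [[c _ histE]|hist0]; last first.
  by rewrite !hist0 mulr0 add0r mulrDl mul1r divfK ?gt_eqF //; lra.
have := bin_count_hamming1 c xy1; rewrite -(ler_nat R) -addn1 natrD.
rewrite !histE; set cx := (bin_count h x c)%:R; set cy := (bin_count h y c)%:R.
have aE (cz : R) : (1 - delta) * (cz / n%:R * m%:R) = a * cz by rewrite /a; ring.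
rewrite !aE => cxy; have cy_ge0 : 0 <= cy by rewrite /cy ler0n.
have : a * cx <= a * (cy + 1) by rewrite ler_wpM2l.
have : 0 <= a / delta * (a * cy).
  by apply: mulr_ge0; [rewrite divr_ge0 // ltW|exact: mulr_ge0].
have -> : (a / delta + 1) * (a * cy + delta) =
    a / delta * (a * cy) + a * cy + a + delta.
  by field; rewrite gt_eqF.
lra.
Qed.

End histogram_bounds.

Section measurability.
Context d (T : measurableType d).

Lemma measurable_fun_forall (J : finType) (p : J -> T -> bool) :
  (forall i, measurable_fun setT (p i)) ->
  measurable_fun setT (fun t => [forall i, p i t]).
Proof.
move=> mp; apply: (measurable_fun_bool true).
have -> : setT `&` (fun t => [forall i, p i t]) @^-1` [set true] =
    \bigcap_(i in [set: J]) (setT `&` p i @^-1` [set true]).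
  apply/seteqP; split=> t /= => [[_ /forallP pt] i _|pt].
    by split=> //; exact: pt.
  by split=> //; apply/forallP => i; case: (pt i I).
apply: fin_bigcap_measurable => [|i _]; first exact: finite_finset.
exact: mp.
Qed.

Lemma measurable_fun_natr_bool (R : realType) (b : T -> bool) :
  measurable_fun setT b -> measurable_fun setT (fun t => (b t)%:R : R).
Proof.
move=> mb; have -> : (fun t => (b t)%:R : R) = fun t => if b t then 1 else 0.
  by apply/funext => t; case: (b t).
exact: measurable_fun_ifT.
Qed.

End measurability.

Section measurable_histogram.
Context (R : realType) (r : nat).

Lemma measurable_in_unit_cube : measurable_fun setT (@in_unit_cube R r).
Proof.
apply: measurable_fun_forall => j.
by apply: measurable_and; apply: measurable_fun_ler => //; exact: measurable_tnth.
Qed.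

Lemma measurable_in_bin N (h : R) (c : {ffun 'I_r -> 'I_N}) :
  measurable_fun setT (in_bin h c).
Proof.
have coord_j j : measurable_fun setT (fun z : r.-tuple R => tnth z j).
  exact: measurable_tnth.
apply: measurable_fun_forall => j; apply: measurable_and.
  exact: measurable_fun_ler.
apply: measurable_or; first exact: measurable_fun_ltr.
by apply: measurable_and => //; exact: measurable_fun_eqr.
Qed.

Lemma measurable_smoothed_histogram n N (h delta : R) (x : n.-tuple (r.-tuple R)) :
  measurable_fun setT (smoothed_histogram N h delta x).
Proof.
apply: measurable_fun_ifT => //; first exact: measurable_in_unit_cube.
apply: measurable_funD => //; apply: measurable_funM => //.
apply: measurable_sum => c; apply: measurable_funM => //.
apply: measurable_fun_natr_bool; exact: measurable_in_bin.
Qed.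

End measurable_histogram.

Lemma lee_prod_scale (R : realType) (k : nat) (a b : 'I_k -> \bar R) (K : R) :
  0 <= K -> (forall i, (0 <= a i)%E) -> (forall i, (0 <= b i)%E) ->
  (forall i, (a i <= K%:E * b i)%E) ->
  (\prod_(i < k) a i <= (K ^+ k)%:E * \prod_(i < k) b i)%E.
Proof.
elim: k a b => [|k IHk] a b K_ge0 a_ge0 b_ge0 ab; first by rewrite !big_ord0 mul1e.
rewrite !big_ord_recr /= exprSr EFinM muleACA.
by apply: lee_pmul; rewrite ?prode_ge0 ?IHk.
Qed.

Lemma lebesgue_unit_cube (R : realType) (r : nat)
    (lam : {measure set (r.-tuple R) -> \bar R}) :
  is_lebesgue_tuple lam -> lam [set z | in_unit_cube z] = 1%E.
Proof.
move=> /(_ (fun=> 0) (fun=> 1) (fun=> ler01)).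
rewrite big1 => [<-|j _]; last by rewrite subr0.
by congr (lam _); apply/seteqP; split=> z /= => [/forallP|zcube]; last exact/forallP.
Qed.

Section smoothed_histogram_integrals.
Context (R : realType) (r n N m : nat) (h delta : R).
Context (lam : {measure set (r.-tuple R) -> \bar R}).
Hypotheses (h_gt0 : 0 < h) (mE : m%:R = h ^- r).
Hypotheses (delta_gt0 : 0 < delta) (delta_lt1 : delta < 1).
Local Open Scope ereal_scope.

Let smoothed_ge0 (x : n.-tuple (r.-tuple R)) (z : r.-tuple R) :
  0 <= (smoothed_histogram N h delta x z)%:E.
Proof. by rewrite lee_fin (smoothed_histogram_ge0 N h_gt0 mE). Qed.

Let measurable_smoothed (x : n.-tuple (r.-tuple R)) :
  measurable_fun setT (fun z => (smoothed_histogram N h delta x z)%:E).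
Proof. by apply/measurable_EFinP; exact: measurable_smoothed_histogram. Qed.

Lemma integral_smoothed_histogram_hamming1 (x y : n.-tuple (r.-tuple R))
    (D : set (r.-tuple R)) : measurable D -> hamming x y = 1%N ->
  \int[lam]_(z in D) (smoothed_histogram N h delta x z)%:E <=
  (smoothing_ratio n m delta)%:E *
    \int[lam]_(z in D) (smoothed_histogram N h delta y z)%:E.
Proof.
move=> mD xy1.
have K_ge0 : (0 <= smoothing_ratio n m delta)%R.
  exact: le_trans ler01 (smoothing_ratio_ge1 n m delta_gt0 delta_lt1).
rewrite -(ge0_integralZl_EFin lam mD (fun z _ => smoothed_ge0 y z)
  (measurable_funTS (measurable_smoothed y)) K_ge0).
apply: (ge0_le_integral lam mD (fun z _ => smoothed_ge0 x z)
  (measurable_funTS (measurable_smoothed x))).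
  by apply/measurable_funTS/measurable_EFinP/measurable_funM => //;
    exact: measurable_smoothed_histogram.
by move=> z _; rewrite -EFinM lee_fin (smoothed_histogram_hamming1 N h_gt0 mE).
Qed.

Lemma integral_smoothed_histogram_le (x : n.-tuple (r.-tuple R)) :
  lam [set z | in_unit_cube z] = 1 ->
  \int[lam]_z (smoothed_histogram N h delta x z)%:E <= (m%:R + 1)%:E.
Proof.
set cube := [set z | in_unit_cube z] => lam_cube.
have mcube : measurable cube.
  by rewrite -[cube]setTI; exact: measurable_in_unit_cube.
have cube_indicE z : (in_unit_cube z)%:R = \1_cube z :> R.
  rewrite indicE (_ : z \in cube = in_unit_cube z) //.
  by apply/idP/idP => [/set_mem|/mem_set].
have m1_ge0 : (0 <= m%:R + 1 :> R)%R by rewrite addr_ge0.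
apply: (@le_trans _ _ (\int[lam]_z ((m%:R + 1)%:E * (\1_cube z)%:E))).
  apply: (ge0_le_integral lam measurableT (fun z _ => smoothed_ge0 x z)
    (measurable_smoothed x)).
    by apply/measurable_EFinP/measurable_funM => //; exact: measurable_indic.
  move=> z _; rewrite -EFinM lee_fin -cube_indicE.
  exact: smoothed_histogram_le.
rewrite ge0_integralZl_EFin ?integral_indic ?setIT ?lam_cube ?mule1 //.
by apply/measurable_EFinP; exact: measurable_indic.
Qed.

Let integral_smoothed_ge0 (x : n.-tuple (r.-tuple R)) (D : set (r.-tuple R)) :
  0 <= \int[lam]_(z in D) (smoothed_histogram N h delta x z)%:E.
Proof. by apply: integral_ge0 => z _; exact: smoothed_ge0. Qed.

Lemma prod_integral_smoothed_histogram_hamming1 (k : nat)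
    (x y : n.-tuple (r.-tuple R)) (C : 'I_k -> set (r.-tuple R)) :
  (forall i, measurable (C i)) -> hamming x y = 1%N ->
  \prod_(i < k) \int[lam]_(z in C i) (smoothed_histogram N h delta x z)%:E <=
  (smoothing_ratio n m delta ^+ k)%:E *
    \prod_(i < k) \int[lam]_(z in C i) (smoothed_histogram N h delta y z)%:E.
Proof.
move=> mC xy1; apply: lee_prod_scale => [|i|i|i].
- exact: le_trans ler01 (smoothing_ratio_ge1 n m delta_gt0 delta_lt1).
- exact: integral_smoothed_ge0.
- exact: integral_smoothed_ge0.
- exact: integral_smoothed_histogram_hamming1.
Qed.

Lemma prod_integral_smoothed_histogram_lty (k : nat) (x : n.-tuple (r.-tuple R)) :
  is_lebesgue_tuple lam ->
  \prod_(i < k) \int[lam]_z (smoothed_histogram N h delta x z)%:E < +oo.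
Proof.
move=> /lebesgue_unit_cube lam_cube.
have m1_ge0 : (0 <= m%:R + 1 :> R)%R by rewrite addr_ge0.
apply: le_lt_trans (lee_prod_scale (b := fun=> 1) m1_ge0 _ (fun=> lee01) _) _ => //.
  by move=> i; rewrite mule1; exact: integral_smoothed_histogram_le.
by rewrite big1 // mule1 ltry.
Qed.

End smoothed_histogram_integrals.

Theorem mainTheorem4 (R : realType) (r n k N m : nat) (h delta alpha : R)
  (lam : {measure set (r.-tuple R) -> \bar R})
  (Q : n.-tuple (r.-tuple R) -> {measure set (k.-tuple (r.-tuple R)) -> \bar R}) :
  (1 <= r)%N ->
  0 < h < 1 -> h = N%:R^-1 -> m%:R = h ^- r ->
  0 < delta < 1 -> 0 <= alpha ->
  is_lebesgue_tuple lam ->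
  (forall x : n.-tuple (r.-tuple R), is_database x ->
    forall B : 'I_k -> set (r.-tuple R), (forall i, measurable (B i)) ->
      Q x [set z | forall i : 'I_k, B i (tnth z i)] =
      (\prod_(i < k)
         \int[lam]_(y in B i) (smoothed_histogram N h delta x y)%:E)%E) ->
  k%:R * ln ((1 - delta) * m%:R / (n%:R * delta) + 1) <= alpha ->
  forall x y : n.-tuple (r.-tuple R), is_database x -> is_database y ->
    hamming x y = 1%N ->
    forall B : set (k.-tuple (r.-tuple R)), measurable B ->
      (Q x B <= (expR alpha)%:E * Q y B)%E.
Proof.
move=> _ /andP[h_gt0 _] _ mE /andP[delta_gt0 delta_lt1] _ lam_leb QE ratio_le
  x y x_db y_db xy1 B mB.
have Kk_le : smoothing_ratio n m delta ^+ k <= expR alpha.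
  have K_gt0 := lt_le_trans ltr01 (smoothing_ratio_ge1 n m delta_gt0 delta_lt1).
  by rewrite -[X in X ^+ k]lnK ?posrE // -expRM_natl ler_expR.
rewrite -[X in (_ <= X)%E]/(mscale (NngNum (expR_ge0 alpha)) (Q y) B).
apply: le_measure_rect mB => [|C mC] /=.
  have -> : [set: k.-tuple (r.-tuple R)] = rect (fun=> setT) by apply/seteqP.
  rewrite /mscale /= (QE y y_db (fun=> setT)) => [|_]; last exact: measurableT.
  apply: lte_mul_pinfty; rewrite ?lee_fin ?expR_ge0 //.
  exact: (prod_integral_smoothed_histogram_lty N h_gt0 mE delta_gt0 delta_lt1
    k y lam_leb).
rewrite /mscale /= (QE x x_db C mC) (QE y y_db C mC).
apply: le_trans (prod_integral_smoothed_histogram_hamming1 N lam h_gt0 mE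
  delta_gt0 delta_lt1 mC xy1) _.
rewrite lee_wpmul2r ?lee_fin // prode_ge0 // => i _.
by apply: integral_ge0 => z _; rewrite lee_fin (smoothed_histogram_ge0 N h_gt0 mE).
Qed.
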